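(* For binary matrices $P\in\{0,1\}^{k\times\ell}$ and $M\in\{0,1\}^{m\times n}$ the following are equivalent: 1. $P$ is an interval minor of $M$; 2. $M$ has a partition containing $P$; 3. $P$ has an embedding into $M$; 4. $P$ has a partial embedding into $M$.
   Context: Rows are numbered top to bottom, columns left to right; $(i,j)$ is the entry in row $i$, column $j$, a 1-entry if it equals 1. For integers, $[a,b]=\{a,\dots,b\}$, $(a,b]=[a+1,b]$, $[n]=[1,n]$. A row contraction in $M$ replaces two adjacent rows $r,r+1$ by a single row whose entry in column $j$ is $\max\{M(r,j),M(r+1,j)\}$; column contraction is analogous. A matrix $M'$ dominates $M$ if they have the same dimensions and every 1-entry of $M$ is a 1-entry of $M'$. $P$ is an interval minor of $M$ if $M$ can be transformed by a sequence of row and column contractions into a $k\times\ell$ matrix dominating $P$. A partition of $M$ containing $P$ is a choice of integers $0\le r_0<r_1<\dots<r_k\le m$ and $0\le c_0<c_1<\dots<c_\ell\le n$ such that for every 1-entry $(i,j)$ of $P$ the submatrix of $M$ on rows $(r_{i-1},r_i]$ and columns $(c_{j-1},c_j]$ has a 1-entry. An embedding of $P$ into $M$ is a map $\phi:[k]\times[\ell]\to[m]\times[n]$ sending 1-entries of $P$ to 1-entries of $M$ such that for any entries $e_1=(i_1,j_1)$, $e_2=(i_2,j_2)$ with $\phi(e_1)=(i_1^*,j_1^* )$, $\phi(e_2)=(i_2^*,j_2^* )$: $i_1<i_2$ implies $i_1^*<i_2^*$, and $j_1<j_2$ implies $j_1^*<j_2^*$. For a nonempty $S\subseteq[k]\times[\ell]$,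 a partial embedding is a map $\psi:S\to[m]\times[n]$ such that: every 1-entry $e$ of $P$ lies in $S$ and $\psi(e)$ is a 1-entry of $M$; each $e=(i,j)\in S$ is mapped to $(i^*,j^* )$ with $i\le i^*$, $j\le j^*$, $k-i\le m-i^*$, $\ell-j\le n-j^*$; and for $e_1=(i_1,j_1)$, $e_2=(i_2,j_2)$ in $S$ with images $(i_1^*,j_1^* )$, $(i_2^*,j_2^* )$: if $i_1<i_2$ then $i_2-i_1\le i_2^*-i_1^*$, and if $j_1<j_2$ then $j_2-j_1\le j_2^*-j_1^*$. *)

(* Binary matrices are 'M[bool]_(m, n); rows/columns are
   0-based ordinals (the paper's row i is our row i-1). *)
From mathcomp Require Import all_boot all_order all_algebra.
Set Implicit Arguments. Unset Strict Implicit. Unset Printing Implicit Defensive.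

Definition row_contract (m n : nat) (r : nat) (A : 'M[bool]_(m.+1, n)) : 'M[bool]_(m, n) :=
  \matrix_(i < m, j < n)
    if (i < r)%N then A (inord i) j
    else if i == r :> nat then A (inord i) j || A (inord i.+1) j
    else A (inord i.+1) j.

Definition col_contract (m n : nat) (c : nat) (A : 'M[bool]_(m, n.+1)) : 'M[bool]_(m, n) :=
  \matrix_(i < m, j < n)
    if (j < c)%N then A i (inord j)
    else if j == c :> nat then A i (inord j) || A i (inord j.+1)
    else A i (inord j.+1).

Inductive contracts_to (m n : nat) (A : 'M[bool]_(m, n)) :
  forall m' n', 'M[bool]_(m', n') -> Prop :=
| ct_refl : contracts_to A A
| ct_row : forall m' n' (B : 'M[bool]_(m'.+1, n')) (r : nat),
    (r < m')%N -> contracts_to A B -> contracts_to A (row_contract r B)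
| ct_col : forall m' n' (B : 'M[bool]_(m', n'.+1)) (c : nat),
    (c < n')%N -> contracts_to A B -> contracts_to A (col_contract c B).

Definition dominates (m n : nat) (M' M : 'M[bool]_(m, n)) : Prop :=
  forall i j, M i j -> M' i j.

Definition interval_minor (k l m n : nat) (P : 'M[bool]_(k, l)) (M : 'M[bool]_(m, n)) : Prop :=
  exists C : 'M[bool]_(k, l), contracts_to M C /\ dominates C P.

(* Partition of M containing P: 0 <= r_0 < ... < r_k <= m, 0 <= c_0 < ... < c_l <= n,
   and for every 1-entry (i,j) of P (paper's 1-based (i+1,j+1)) the block on rows
   (r_i, r_{i+1}] and columns (c_j, c_{j+1}] (1-based) contains a 1-entry. *)
Definition has_partition_containing (k l m n : nat) (P : 'M[bool]_(k, l))
    (M : 'M[bool]_(m, n)) : Prop :=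
  exists (r c : nat -> nat),
    (forall i, (i < k)%N -> (r i < r i.+1)%N) /\ (r k <= m)%N /\
    (forall j, (j < l)%N -> (c j < c j.+1)%N) /\ (c l <= n)%N /\
    forall (i : 'I_k) (j : 'I_l), P i j ->
      exists (a : 'I_m) (b : 'I_n),
        [&& (r i < a.+1)%N, (a.+1 <= r i.+1)%N, (c j < b.+1)%N, (b.+1 <= c j.+1)%N & M a b].

Definition is_embedding (k l m n : nat) (P : 'M[bool]_(k, l)) (M : 'M[bool]_(m, n))
    (phi : 'I_k * 'I_l -> 'I_m * 'I_n) : Prop :=
  (forall e : 'I_k * 'I_l, P e.1 e.2 -> M (phi e).1 (phi e).2) /\
  (forall e1 e2 : 'I_k * 'I_l, (e1.1 < e2.1)%N -> ((phi e1).1 < (phi e2).1)%N) /\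
  (forall e1 e2 : 'I_k * 'I_l, (e1.2 < e2.2)%N -> ((phi e1).2 < (phi e2).2)%N).

Definition has_embedding (k l m n : nat) (P : 'M[bool]_(k, l)) (M : 'M[bool]_(m, n)) : Prop :=
  exists phi, is_embedding P M phi.

(* Partial embedding psi : S -> [m] x [n], with S a nonempty subset of [k] x [l];
   psi is represented by a total function whose values outside S are irrelevant.
   All index conditions are shifted to 0-based indices (differences unchanged). *)
Definition is_partial_embedding (k l m n : nat) (P : 'M[bool]_(k, l)) (M : 'M[bool]_(m, n))
    (S : {set 'I_k * 'I_l}) (psi : 'I_k * 'I_l -> 'I_m * 'I_n) : Prop :=
  S != set0 /\
  (forall e : 'I_k * 'I_l, P e.1 e.2 -> e \in S /\ M (psi e).1 (psi e).2) /\
  (forall e : 'I_k * 'I_l, e \in S ->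
     [/\ (e.1 <= (psi e).1)%N, (e.2 <= (psi e).2)%N,
         (k - e.1 <= m - (psi e).1)%N & (l - e.2 <= n - (psi e).2)%N]) /\
  (forall e1 e2 : 'I_k * 'I_l, e1 \in S -> e2 \in S ->
     ((e1.1 < e2.1)%N -> (e2.1 - e1.1 <= (psi e2).1 - (psi e1).1)%N) /\
     ((e1.2 < e2.2)%N -> (e2.2 - e1.2 <= (psi e2).2 - (psi e1).2)%N)).

Definition has_partial_embedding (k l m n : nat) (P : 'M[bool]_(k, l)) (M : 'M[bool]_(m, n)) : Prop :=
  exists S psi, is_partial_embedding P M S psi.

(* The matrices obtained from M by contractions are exactly the block matrices
   [coarsen r c M]: the cuts r and c split the rows and the columns of M into
   consecutive nonempty intervals, and an entry is 1 iff its block of M contains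
   a 1.  Contracting rows i, i+1 merges two row blocks; conversely every block
   structure is reached by splitting off one row at a time, and columns follow
   by transposition.  A partition containing P is such a pair of cuts once its
   outer intervals are stretched to the border of M, whence (1) <-> (2).

   For (2) -> (3), send an entry of P to a 1 of its block when P requires one
   and to the corner of its block otherwise.  For (3) -> (2), let the i-th cut
   be one past the largest image of the rows above i; these cuts also give the
   gap conditions of a partial embedding, hence (3) -> (4).  Conversely, a
   partial embedding extends coordinatewise: an entry of row i outside S goes to
   the least row respecting the gaps to all entries of S in rows <= i, namely
   max(i, max {row (psi f) + (i - row f) | f in S, row f <= i}), which is
   increasing in i. *)

From mathcomp Require Import all_boot all_order all_algebra.
From mathcomp Require Import zify.
Set Implicit Arguments. Unset Strict Implicit. Unset Printing Implicit Defensive.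

Definition increasing_on (r : nat -> nat) (p : nat) := forall i, i < p -> r i < r i.+1.

Lemma increasing_on_gap r p i j :
  increasing_on r p -> i <= j -> j <= p -> r i + (j - i) <= r j.
Proof.
move=> r_incr; elim: j => [|j IH] le_ij le_jp.
  by move: le_ij; rewrite leqn0 => /eqP ->; rewrite addn0.
have [lt_ij|ge_ij] := ltnP i j.+1.
  by have := IH lt_ij (ltnW le_jp); have := r_incr j le_jp; lia.
have -> : i = j.+1 by lia.
by rewrite subnn addn0.
Qed.

Definition cuts (r : nat -> nat) (p m : nat) := [/\ r 0 = 0, r p = m & increasing_on r p].

Lemma cuts_bounds r p m i : cuts r p m -> i <= p -> i <= r i /\ r i + (p - i) <= m.
Proof.
case=> r0 rp r_incr le_ip.
have := increasing_on_gap r_incr (leq0n i) le_ip.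
have := increasing_on_gap r_incr le_ip (leqnn p); lia.
Qed.

Lemma cuts_wide_block r p m : cuts r p m -> p < m -> exists2 i, i < p & (r i).+1 < r i.+1.
Proof.
case=> r0 rp _ lt_pm.
have [/existsP [i wide]|/existsPn narrow] := boolP [exists i : 'I_p, (r i).+1 < r i.+1].
  by exists i.
suff : forall i, i <= p -> r i <= i by move/(_ p (leqnn p)); lia.
elim=> [|i IH] le_ip; first by rewrite r0.
have := IH (ltnW le_ip); have := narrow (Ordinal le_ip); rewrite /=; lia.
Qed.

Definition merge_cut (r : nat -> nat) (i0 i : nat) := if i <= i0 then r i else r i.+1.

Definition split_cut (r : nat -> nat) (i0 i : nat) :=
  if i <= i0 then r i else if i == i0.+1 then (r i0).+1 else r i.-1.

Lemma cuts_merge r p m i0 : cuts r p.+1 m -> i0 < p -> cuts (merge_cut r i0) p m.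
Proof.
case=> r0 rp r_incr lt_i0p; split; rewrite /merge_cut //; first by rewrite leqNgt lt_i0p.
move=> i lt_ip; have := r_incr i (ltnW lt_ip); have := r_incr i.+1 lt_ip.
by case: (leqP i i0); case: (leqP i.+1 i0); lia.
Qed.

Lemma cuts_split r p m i0 :
  cuts r p m -> i0 < p -> (r i0).+1 < r i0.+1 -> cuts (split_cut r i0) p.+1 m.
Proof.
case=> r0 rp r_incr lt_i0p wide; split; rewrite /split_cut //.
  by rewrite leqNgt ltnS ltnW // eqSS gtn_eqF.
move=> i lt_ip; rewrite /split_cut; have [lt_ii0|gt_ii0|->] := ltngtP i i0.
- by apply: r_incr; lia.
- have -> : (i.+1 == i0.+1) = false by lia.
  case: eqP => [-> //|ne]; have lt_predp : i.-1 < p by lia.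
  by have := r_incr _ lt_predp; rewrite (ltn_predK gt_ii0).
- by rewrite eqxx.
Qed.

Lemma merge_split_cut r i0 : merge_cut (split_cut r i0) i0 =1 r.
Proof.
move=> i; rewrite /merge_cut /split_cut; case: (leqP i i0) => // lt_i0i.
have -> : (i.+1 <= i0) = false by lia.
by rewrite eqSS gtn_eqF.
Qed.

Definition in_block (r : nat -> nat) (i a : nat) := r i <= a < r i.+1.

Lemma in_block_merge r p i0 i a :
  increasing_on r p.+1 -> i0 < p ->
  in_block (merge_cut r i0) i a =
  if i < i0 then in_block r i a
  else if i == i0 then in_block r i a || in_block r i.+1 a
  else in_block r i.+1 a.
Proof.
move=> r_incr lt_i0p; rewrite /in_block /merge_cut.
have [//|//|->] := ltngtP i i0.
have lt_01 := r_incr i0 (ltnW lt_i0p); have lt_12 := r_incr i0.+1 lt_i0p.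
case: (ltnP a (r i0.+1)) => [lt_a|ge_a] /=.
  by rewrite andbT orbF (ltn_trans lt_a lt_12) andbT.
by rewrite andbF (leq_trans (ltnW lt_01) ge_a).
Qed.

Definition coarsen {m' n' m n : nat} (r c : nat -> nat) (M : 'M[bool]_(m, n)) :
    'M[bool]_(m', n') :=
  \matrix_(i < m', j < n')
    [exists a : 'I_m, in_block r i a && [exists b : 'I_n, in_block c j b && M a b]].

Lemma coarsen_eq m n (M : 'M[bool]_(m, n)) m' n' r r' c c' :
  (forall i, i <= m' -> r i = r' i) -> (forall j, j <= n' -> c j = c' j) ->
  coarsen r c M = coarsen r' c' M :> 'M_(m', n').
Proof.
move=> eq_r eq_c; apply/matrixP => i j; rewrite !mxE /in_block.
rewrite !eq_r ?eq_c ?(ltnW (ltn_ord _)) //.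
Qed.

Lemma coarsen_id m n (M : 'M[bool]_(m, n)) : coarsen id id M = M.
Proof.
apply/matrixP => i j; rewrite mxE /in_block; apply/existsP/idP => [[a]|Mij].
  case/andP=> /andP [le_ia lt_ai] /existsP [b /andP [/andP [le_jb lt_bj] Mab]].
  have -> : i = a by apply: ord_inj; lia.
  have -> : j = b by apply: ord_inj; lia.
  exact: Mab.
by exists i; rewrite leqnn ltnSn; apply/existsP; exists j; rewrite leqnn ltnSn.
Qed.

Lemma trmx_coarsen m n (M : 'M[bool]_(m, n)) m' n' r c :
  trmx (coarsen r c M : 'M_(m', n')) = coarsen c r (trmx M).
Proof.
apply/matrixP => i j; rewrite !mxE; apply/existsP/existsP.
  move=> [a /andP [ra /existsP [b /andP [cb Mab]]]].
  by exists b; rewrite cb; apply/existsP; exists a; rewrite ra mxE.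
move=> [b /andP [cb /existsP [a /andP [ra Mab]]]].
by exists a; rewrite ra; apply/existsP; exists b; rewrite cb; move: Mab; rewrite mxE.
Qed.

Lemma existsb_orl (T : finType) (P Q R : pred T) :
  [exists x, (P x || Q x) && R x] = [exists x, P x && R x] || [exists x, Q x && R x].
Proof.
apply/existsP/orP => [[x /andP [/orP [Px|Qx] Rx]]|[] /existsP [x /andP [Hx Rx]]].
- by left; apply/existsP; exists x; rewrite Px.
- by right; apply/existsP; exists x; rewrite Qx.
- by exists x; rewrite Hx.
- by exists x; rewrite Hx orbT.
Qed.

Lemma row_contract_coarsen m n (M : 'M[bool]_(m, n)) p n' r c i0 :
  increasing_on r p.+1 -> i0 < p ->
  row_contract i0 (coarsen r c M : 'M_(p.+1, n')) = coarsen (merge_cut r i0) c M.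
Proof.
move=> r_incr lt_i0p; apply/matrixP => i j; rewrite !mxE.
have lt_ip : i < p.+1 := ltnW (ltn_ord i).
have lt_i1p : i.+1 < p.+1 := ltn_ord i.
rewrite !inordK //; symmetry.
under eq_existsb => a do rewrite (in_block_merge _ _ r_incr lt_i0p).
by case: ltngtP => _ //; rewrite existsb_orl.
Qed.

Lemma col_contract_trmx m n (A : 'M[bool]_(m, n.+1)) j0 :
  col_contract j0 A = trmx (row_contract j0 (trmx A)).
Proof. by apply/matrixP => i j; rewrite !mxE. Qed.

Lemma row_contract_trmx m n (A : 'M[bool]_(m.+1, n)) i0 :
  row_contract i0 A = trmx (col_contract i0 (trmx A)).
Proof. by rewrite col_contract_trmx !trmxK. Qed.

Lemma col_contract_coarsen m n (M : 'M[bool]_(m, n)) m' q r c j0 :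
  increasing_on c q.+1 -> j0 < q ->
  col_contract j0 (coarsen r c M : 'M_(m', q.+1)) = coarsen r (merge_cut c j0) M.
Proof.
move=> c_incr lt_j0q.
by rewrite col_contract_trmx trmx_coarsen row_contract_coarsen // trmx_coarsen trmxK.
Qed.

Lemma contracts_to_trans m n (A : 'M[bool]_(m, n)) m1 n1 (B : 'M[bool]_(m1, n1))
    m2 n2 (C : 'M[bool]_(m2, n2)) :
  contracts_to A B -> contracts_to B C -> contracts_to A C.
Proof.
by move=> AB; elim=> // [m' n' D i0 lt_i0 _ AD|m' n' D j0 lt_j0 _ AD];
  [exact: ct_row | exact: ct_col].
Qed.

Lemma contracts_to_trmx m n (A : 'M[bool]_(m, n)) m' n' (B : 'M[bool]_(m', n')) :
  contracts_to A B -> contracts_to (trmx A) (trmx B).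
Proof.
elim=> [|m1 n1 D i0 lt_i0 _ AD|m1 n1 D j0 lt_j0 _ AD]; first exact: ct_refl.
  by rewrite row_contract_trmx trmxK; exact: ct_col.
by rewrite col_contract_trmx trmxK; exact: ct_row.
Qed.

Lemma cuts_id m : cuts id m m.
Proof. by split. Qed.

Lemma contracts_to_coarsen_rows m n (M : 'M[bool]_(m, n)) n' c m' r :
  cuts r m' m -> contracts_to (coarsen id c M : 'M_(m, n')) (coarsen r c M : 'M_(m', n')).
Proof.
move: {2}(m - m') (erefl (m - m')) => d; elim: d m' r => [|d IH] m' r def_d cr.
  have [le_m'rm' le_rm'm] := cuts_bounds cr (leqnn m').
  have eq_m'm : m' = m by lia.
  subst m'; have r_id : forall i, i <= m -> r i = i.
    by move=> i le_im; have := cuts_bounds cr le_im; lia.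
  by rewrite (coarsen_eq M r_id (fun _ _ => erefl)); exact: ct_refl.
have lt_m'm : m' < m by lia.
have [i0 lt_i0 wide] := cuts_wide_block cr lt_m'm.
have cr' := cuts_split cr lt_i0 wide.
have def_d' : m - m'.+1 = d by lia.
have := ct_row lt_i0 (IH m'.+1 _ def_d' cr').
rewrite row_contract_coarsen //; last by case: cr'.
by rewrite (coarsen_eq M (fun i _ => merge_split_cut r i0 i) (fun _ _ => erefl)).
Qed.

Lemma contracts_to_coarsen m n (M : 'M[bool]_(m, n)) m' n' r c :
  cuts r m' m -> cuts c n' n -> contracts_to M (coarsen r c M : 'M_(m', n')).
Proof.
move=> cr cc; apply: (contracts_to_trans _ (contracts_to_coarsen_rows M n' c cr)).
have := contracts_to_trmx (contracts_to_coarsen_rows (trmx M) m id cc).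
by rewrite !trmx_coarsen trmxK coarsen_id.
Qed.

Lemma contracts_to_coarsen_inv m n (M : 'M[bool]_(m, n)) m' n' (B : 'M[bool]_(m', n')) :
  contracts_to M B -> exists r c, [/\ cuts r m' m, cuts c n' n & B = coarsen r c M].
Proof.
elim=> [|m1 n1 D i0 lt_i0 _ [r [c [cr cc ->]]]|m1 n1 D j0 lt_j0 _ [r [c [cr cc ->]]]].
- by exists id, id; split; [exact: cuts_id | exact: cuts_id | rewrite coarsen_id].
- exists (merge_cut r i0), c; split; [exact: cuts_merge | by [] |].
  by rewrite row_contract_coarsen //; case: cr.
- exists r, (merge_cut c j0); split; [by [] | exact: cuts_merge |].
  by rewrite col_contract_coarsen //; case: cc.
Qed.

Definition widen_cut (r : nat -> nat) (p m i : nat) :=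
  if i == 0 then 0 else if i == p then m else r i.

Lemma cuts_widen r p m : 0 < p -> increasing_on r p -> r p <= m -> cuts (widen_cut r p m) p m.
Proof.
move=> p_gt0 r_incr le_rpm; rewrite /cuts /widen_cut eqxx gtn_eqF // eqxx.
split=> // i lt_ip; have := increasing_on_gap r_incr (ltnW lt_ip) (leqnn p).
have := r_incr i lt_ip; have -> : (i == p) = false by lia.
by rewrite /=; case: eqP => ?; case: eqP => ?; lia.
Qed.

Lemma widen_cut_block r p m i :
  r p <= m -> i < p -> widen_cut r p m i <= r i /\ r i.+1 <= widen_cut r p m i.+1.
Proof.
move=> le_rpm lt_ip; rewrite /widen_cut /= (ltn_eqF lt_ip); split; first by case: eqP.
by case: eqP => [->|].
Qed.

Lemma partition_of_interval_minor k l m n (P : 'M[bool]_(k, l)) (M : 'M[bool]_(m, n)) :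
  interval_minor P M -> has_partition_containing P M.
Proof.
move=> [C [/contracts_to_coarsen_inv [r [c [[_ rk r_incr] [_ cl c_incr] ->]]] dom]].
exists r, c; rewrite rk cl; do !split=> //.
move=> i j /dom; rewrite mxE => /existsP [a /andP [/andP [lo_a hi_a]]].
move=> /existsP [b /andP [/andP [lo_b hi_b] Mab]].
by exists a, b; rewrite !ltnS lo_a hi_a lo_b hi_b Mab.
Qed.

Lemma interval_minor_of_partition k l m n (P : 'M[bool]_(k, l)) (M : 'M[bool]_(m, n)) :
  0 < k -> 0 < l -> has_partition_containing P M -> interval_minor P M.
Proof.
move=> k_gt0 l_gt0 [r [c [r_incr [le_rkm [c_incr [le_cln blocks]]]]]].
exists (coarsen (widen_cut r k m) (widen_cut c l n) M); split.
  by apply: contracts_to_coarsen; apply: cuts_widen.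
move=> i j /blocks [a [b /and5P [lo_a hi_a lo_b hi_b Mab]]].
have [wr_lo wr_hi] := widen_cut_block le_rkm (ltn_ord i).
have [wc_lo wc_hi] := widen_cut_block le_cln (ltn_ord j).
have a_in : in_block (widen_cut r k m) i a by apply/andP; split; lia.
have b_in : in_block (widen_cut c l n) j b by apply/andP; split; lia.
by rewrite mxE; apply/existsP; exists a; rewrite a_in; apply/existsP; exists b; rewrite b_in.
Qed.

Section EmbeddingCut.
Variables (I : finType) (k m : nat) (x y : I -> nat).
Hypothesis x_lt : forall e, x e < k.
Hypothesis y_lt : forall e, y e < m.
Hypothesis y_incr : forall e1 e2, x e1 < x e2 -> y e1 < y e2.
Hypothesis x_onto : forall i, i < k -> exists e, x e = i.

Definition embedding_cut i := \max_(e | x e < i) (y e).+1.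

Lemma embedding_cut_block e : in_block embedding_cut (x e) (y e).
Proof.
rewrite /in_block /embedding_cut; apply/andP; split; first by apply/bigmax_leqP => f /y_incr.
exact: leq_bigmax_cond e (ltnSn _).
Qed.

Lemma embedding_cut_incr : increasing_on embedding_cut k.
Proof.
by move=> i /x_onto [e <-]; case/andP: (embedding_cut_block e); apply: leq_ltn_trans.
Qed.

Lemma embedding_cut_le : embedding_cut k <= m.
Proof. by apply/bigmax_leqP => e _; apply: y_lt. Qed.

Lemma embedding_dist e1 e2 : x e1 < x e2 -> x e2 - x e1 <= y e2 - y e1.
Proof.
move=> lt_x; have /andP [_ hi1] := embedding_cut_block e1.
have /andP [lo2 _] := embedding_cut_block e2.
have := increasing_on_gap embedding_cut_incr lt_x (ltnW (x_lt e2)); lia.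
Qed.

Lemma embedding_margins e : x e <= y e /\ k - x e <= m - y e.
Proof.
have /andP [lo hi] := embedding_cut_block e.
have := increasing_on_gap embedding_cut_incr (leq0n (x e)) (ltnW (x_lt e)).
have := increasing_on_gap embedding_cut_incr (x_lt e) (leqnn k).
have := embedding_cut_le; lia.
Qed.

End EmbeddingCut.

Lemma bigmax_ltn (I : finType) (P : pred I) (F : I -> nat) c :
  0 < c -> (forall i, P i -> F i < c) -> \max_(i | P i) F i < c.
Proof.
move=> c_gt0 F_lt; rewrite -(prednK c_gt0) ltnS.
by apply/bigmax_leqP => i /F_lt; rewrite -(prednK c_gt0).
Qed.

Section PartialEmbeddingExtension.
Variables (I : finType) (k m : nat) (S : pred I) (x y : I -> nat).
Hypothesis x_lt : forall e, x e < k.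
Hypothesis S_margins : forall e, S e -> x e <= y e /\ k - x e <= m - y e.
Hypothesis S_dist : forall e1 e2, S e1 -> S e2 -> x e1 < x e2 -> x e2 - x e1 <= y e2 - y e1.

Definition extended_row i := maxn i (\max_(f | S f && (x f <= i)) (y f + (i - x f))).

Definition extend e := if S e then y e else extended_row (x e).

Lemma extended_row_ge f i : S f -> x f <= i -> y f + (i - x f) <= extended_row i.
Proof.
move=> Sf le_fi; apply: leq_trans (leq_maxr _ _).
by apply: leq_bigmax_cond; rewrite Sf le_fi.
Qed.

Lemma extended_row_lt i c :
  i < c -> (forall f, S f -> x f <= i -> y f + (i - x f) < c) -> extended_row i < c.
Proof.
move=> lt_ic F_lt; rewrite gtn_max lt_ic /=.
by apply: bigmax_ltn => [|f /andP [Sf le_fi]]; [apply: leq_ltn_trans lt_ic | apply: F_lt].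
Qed.

Lemma extended_row_lt_size e0 i : S e0 -> i < k -> extended_row i < m.
Proof.
move=> S_e0 lt_ik; have := S_margins S_e0; have := x_lt e0 => lt_e0 [le_e0 margin_e0].
apply: extended_row_lt => [|f Sf le_fi]; first lia.
by have := S_margins Sf; lia.
Qed.

Lemma extended_row_lt_S f i : S f -> i < x f -> extended_row i < y f.
Proof.
move=> Sf lt_if; have [le_f _] := S_margins Sf.
apply: extended_row_lt => [|g Sg le_gi]; first lia.
have := S_dist Sg Sf (leq_ltn_trans le_gi lt_if); have := S_margins Sg; lia.
Qed.

Lemma extended_row_incr i j : i < j -> extended_row i < extended_row j.
Proof.
move=> lt_ij; apply: extended_row_lt => [|f Sf le_fi].
  exact: leq_trans lt_ij (leq_maxl _ _).
by apply: leq_trans (extended_row_ge Sf (ltnW (leq_ltn_trans le_fi lt_ij))); lia.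
Qed.

Lemma extend_lt e0 : S e0 -> forall e, extend e < m.
Proof.
move=> S_e0 e; rewrite /extend; case: ifP => [Se|_].
  by have := S_margins Se; have := x_lt e; lia.
exact: extended_row_lt_size S_e0 _.
Qed.

Lemma extend_incr e1 e2 : x e1 < x e2 -> extend e1 < extend e2.
Proof.
move=> lt_x; rewrite /extend.
case: ifP => S1; case: ifP => S2.
- by have := S_dist S1 S2 lt_x; have := S_margins S1; lia.
- by have := extended_row_ge S1 (ltnW lt_x); lia.
- exact: extended_row_lt_S.
- exact: extended_row_incr.
Qed.

End PartialEmbeddingExtension.

Lemma embedding_of_partition k l m n (P : 'M[bool]_(k, l)) (M : 'M[bool]_(m, n)) :
  has_partition_containing P M -> has_embedding P M.
Proof.
move=> [r [c [r_incr [le_rkm [c_incr [le_cln blocks]]]]]].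
have r_lt i : i < k -> r i < m.
  by move=> lt_ik; have := increasing_on_gap r_incr (ltnW lt_ik) (leqnn k); lia.
have c_lt j : j < l -> c j < n.
  by move=> lt_jl; have := increasing_on_gap c_incr (ltnW lt_jl) (leqnn l); lia.
pose hit (e : 'I_k * 'I_l) (ab : 'I_m * 'I_n) :=
  [&& in_block r e.1 ab.1, in_block c e.2 ab.2 & M ab.1 ab.2].
pose corner (e : 'I_k * 'I_l) :=
  (Ordinal (r_lt _ (ltn_ord e.1)), Ordinal (c_lt _ (ltn_ord e.2))).
pose phi e := odflt (corner e) [pick ab | hit e ab].
have phi_block (e : 'I_k * 'I_l) : in_block r e.1 (phi e).1 /\ in_block c e.2 (phi e).2.
  rewrite /phi; case: pickP => [ab /and3P [] //|_] /=.
  by rewrite /in_block !leqnn r_incr ?c_incr.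
exists phi; split; [|split].
- move=> [i j] /= /blocks [a [b /and5P [lo_a hi_a lo_b hi_b Mab]]].
  rewrite /phi; case: pickP => [ab /and3P [] //|no_hit].
  rewrite !ltnS in lo_a lo_b.
  by have := no_hit (a, b); rewrite /hit /in_block /= lo_a hi_a lo_b hi_b Mab.
- move=> e1 e2 lt_e.
  have [/andP [_ hi1] _] := phi_block e1; have [/andP [lo2 _] _] := phi_block e2.
  have := increasing_on_gap r_incr lt_e (ltnW (ltn_ord e2.1)); lia.
- move=> e1 e2 lt_e.
  have [_ /andP [_ hi1]] := phi_block e1; have [_ /andP [lo2 _]] := phi_block e2.
  have := increasing_on_gap c_incr lt_e (ltnW (ltn_ord e2.2)); lia.
Qed.

Lemma fst_onto k l : 0 < l -> forall i, i < k -> exists e : 'I_k * 'I_l, e.1 = i :> nat.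
Proof. by move=> l_gt0 i lt_ik; exists (Ordinal lt_ik, Ordinal l_gt0). Qed.

Lemma snd_onto k l : 0 < k -> forall j, j < l -> exists e : 'I_k * 'I_l, e.2 = j :> nat.
Proof. by move=> k_gt0 j lt_jl; exists (Ordinal k_gt0, Ordinal lt_jl). Qed.

Lemma partition_of_embedding k l m n (P : 'M[bool]_(k, l)) (M : 'M[bool]_(m, n)) :
  0 < k -> 0 < l -> has_embedding P M -> has_partition_containing P M.
Proof.
move=> k_gt0 l_gt0 [phi [phiP [row_incr col_incr]]].
have row_onto := @fst_onto k l l_gt0; have col_onto := @snd_onto k l k_gt0.
exists (embedding_cut (fun e : 'I_k * 'I_l => e.1 : nat) (fun e => (phi e).1 : nat)).
exists (embedding_cut (fun e : 'I_k * 'I_l => e.2 : nat) (fun e => (phi e).2 : nat)).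
split; first exact: embedding_cut_incr row_incr row_onto.
split; first exact: embedding_cut_le (fun e => ltn_ord (phi e).1).
split; first exact: embedding_cut_incr col_incr col_onto.
split; first exact: embedding_cut_le (fun e => ltn_ord (phi e).2).
move=> i j Pij; exists (phi (i, j)).1, (phi (i, j)).2.
have /andP [lo_a hi_a] := embedding_cut_block row_incr (i, j).
have /andP [lo_b hi_b] := embedding_cut_block col_incr (i, j).
by rewrite !ltnS lo_a hi_a lo_b hi_b (phiP (i, j) Pij).
Qed.

Lemma partial_embedding_of_embedding k l m n (P : 'M[bool]_(k, l)) (M : 'M[bool]_(m, n)) :
  0 < k -> 0 < l -> has_embedding P M -> has_partial_embedding P M.
Proof.
move=> k_gt0 l_gt0 [phi [phiP [row_incr col_incr]]].
have row_onto := @fst_onto k l l_gt0; have col_onto := @snd_onto k l k_gt0.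
have row_lt (e : 'I_k * 'I_l) : e.1 < k := ltn_ord e.1.
have col_lt (e : 'I_k * 'I_l) : e.2 < l := ltn_ord e.2.
have row_img_lt e : (phi e).1 < m := ltn_ord (phi e).1.
have col_img_lt e : (phi e).2 < n := ltn_ord (phi e).2.
exists setT, phi; split; [|split; [|split]].
- by apply/set0Pn; exists (Ordinal k_gt0, Ordinal l_gt0); rewrite inE.
- by move=> e Pe; rewrite inE; split; last exact: phiP.
- move=> e _; have [row_lo row_hi] := embedding_margins row_lt row_img_lt row_incr row_onto e.
  by have [col_lo col_hi] := embedding_margins col_lt col_img_lt col_incr col_onto e.
- move=> e1 e2 _ _; split=> lt_e.
    exact: embedding_dist row_lt row_incr row_onto _ _ lt_e.
  exact: embedding_dist col_lt col_incr col_onto _ _ lt_e.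
Qed.

Lemma embedding_of_partial_embedding k l m n (P : 'M[bool]_(k, l)) (M : 'M[bool]_(m, n)) :
  has_partial_embedding P M -> has_embedding P M.
Proof.
move=> [S [psi [/set0Pn [e0 S_e0] [PS [margins dist]]]]].
have row_lt (e : 'I_k * 'I_l) : e.1 < k := ltn_ord e.1.
have col_lt (e : 'I_k * 'I_l) : e.2 < l := ltn_ord e.2.
have row_margins e : e \in S -> e.1 <= (psi e).1 /\ k - e.1 <= m - (psi e).1.
  by case/margins.
have col_margins e : e \in S -> e.2 <= (psi e).2 /\ l - e.2 <= n - (psi e).2.
  by case/margins.
have row_dist e1 e2 :
    e1 \in S -> e2 \in S -> e1.1 < e2.1 -> e2.1 - e1.1 <= (psi e2).1 - (psi e1).1.
  by move=> S1 S2; case: (dist e1 e2 S1 S2).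
have col_dist e1 e2 :
    e1 \in S -> e2 \in S -> e1.2 < e2.2 -> e2.2 - e1.2 <= (psi e2).2 - (psi e1).2.
  by move=> S1 S2; case: (dist e1 e2 S1 S2).
have row_ext_lt := extend_lt row_lt row_margins S_e0.
have col_ext_lt := extend_lt col_lt col_margins S_e0.
exists (fun e => (Ordinal (row_ext_lt e), Ordinal (col_ext_lt e))); split; [|split].
- move=> e /PS [Se Me].
  have -> : Ordinal (row_ext_lt e) = (psi e).1 by apply: val_inj; rewrite /= /extend Se.
  by have -> : Ordinal (col_ext_lt e) = (psi e).2 by apply: val_inj; rewrite /= /extend Se.
- by move=> e1 e2 lt_e; apply: extend_incr row_margins row_dist _ _ lt_e.
- by move=> e1 e2 lt_e; apply: extend_incr col_margins col_dist _ _ lt_e.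
Qed.

Theorem lemma2p1 (k l m n : nat) (P : 'M[bool]_(k, l)) (M : 'M[bool]_(m, n)) :
  (0 < k)%N -> (0 < l)%N ->
  [/\ (interval_minor P M <-> has_partition_containing P M),
      (has_partition_containing P M <-> has_embedding P M) &
      (has_embedding P M <-> has_partial_embedding P M)].
Proof.
move=> k_gt0 l_gt0; split; split.
- exact: partition_of_interval_minor.
- exact: interval_minor_of_partition.
- exact: embedding_of_partition.
- exact: partition_of_embedding.
- exact: partial_embedding_of_embedding.
- exact: embedding_of_partial_embedding.
Qed.
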